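(* Let $D$ be a non-commutative division ring with center $F$ and let $M$ be a maximal subgroup of $D^*$. If $M$ is abelian, then $M\cup\{0\}$ is a maximal subfield of $D$; that is, $M=K^*$ for some maximal subfield $K$ of $D$.
   Context: $D^*$ is the multiplicative group of $D$; maximal subgroup = proper subgroup maximal among proper subgroups. A maximal subfield of $D$ is a subfield not properly contained in another subfield. *)

From HB Require Import structures.
From mathcomp Require Import all_boot all_order all_algebra.
Set Implicit Arguments. Unset Strict Implicit. Unset Printing Implicit Defensive.
Import GRing.Theory.
Local Open Scope ring_scope.

Definition is_division_ring (D : unitRingType) : Prop :=
  forall x : D, x != 0 -> x \is a GRing.unit.

Definition is_subgroup_units (D : unitRingType) (S : D -> Prop) : Prop :=
  [/\ forall x, S x -> x != 0,
      S 1,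
      forall x y, S x -> S y -> S (x * y)
    & forall x, S x -> S x^-1].

Definition is_maximal_subgroup_units (D : unitRingType) (M : D -> Prop) : Prop :=
  [/\ is_subgroup_units M,
      (exists x : D, x != 0 /\ ~ M x)
    & forall N : D -> Prop, is_subgroup_units N -> (forall x, M x -> N x) ->
        (exists x : D, x != 0 /\ ~ N x) -> forall x, N x -> M x].

Definition is_abelian (D : unitRingType) (M : D -> Prop) : Prop :=
  forall x y, M x -> M y -> x * y = y * x.

Definition is_subfield (D : unitRingType) (K : D -> Prop) : Prop :=
  [/\ K 0 /\ K 1,
      forall x y, K x -> K y -> K (x - y),
      forall x y, K x -> K y -> K (x * y),
      forall x, K x -> x != 0 -> K x^-1
    & forall x y, K x -> K y -> x * y = y * x].

Definition is_maximal_subfield (D : unitRingType) (K : D -> Prop) : Prop :=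
  is_subfield K /\
  forall L : D -> Prop, is_subfield L -> (forall x, K x -> L x) -> forall x, L x -> K x.

From HB Require Import structures.
From mathcomp Require Import all_boot all_order all_algebra.
From Stdlib Require Import Classical.
Import GRing.Theory.
Set Implicit Arguments. Unset Strict Implicit. Unset Printing Implicit Defensive.
Local Open Scope ring_scope.

(* The nonzero elements of the centralizer C(M) form a subgroup of D^* containing
   the abelian group M, so by maximality either C(M)^* = M or C(M)^* = D^*.  In the
   second case M is central, and then for any w outside M the group C(w)^* contains
   M and w, hence is all of D^*: every element is central and D is commutative.
   So C(M)^* = M, which makes C(M) a subfield; it is maximal because any subfield
   containing C(M) contains M and therefore centralizes it. *)

Definition centralizer (D : unitRingType) (S : D -> Prop) : D -> Prop :=
  fun y => forall s, S s -> y * s = s * y.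

Section Centralizer.

Variables (D : unitRingType) (S : D -> Prop).

Lemma centralizer0 : centralizer S 0.
Proof. by move=> s _; rewrite mul0r mulr0. Qed.

Lemma centralizer1 : centralizer S 1.
Proof. by move=> s _; rewrite mul1r mulr1. Qed.

Lemma centralizerB x y :
  centralizer S x -> centralizer S y -> centralizer S (x - y).
Proof. by move=> Cx Cy s Ss; rewrite mulrBl mulrBr Cx // Cy. Qed.

Lemma centralizerM x y :
  centralizer S x -> centralizer S y -> centralizer S (x * y).
Proof. by move=> Cx Cy s Ss; rewrite -mulrA Cy // mulrA Cx // mulrA. Qed.

Lemma centralizerV x : centralizer S x -> centralizer S x^-1.
Proof.
by move=> Cx s Ss; have := commrV (esym (Cx s Ss)); rewrite /GRing.comm.
Qed.

Lemma subgroup_units_centralizer :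
  is_division_ring D -> is_subgroup_units (fun y => y != 0 /\ centralizer S y).
Proof.
have unit_neq0 (u : D) : u \is a GRing.unit -> u != 0.
  by apply: contraTneq => ->; rewrite unitr0.
move=> divD; split.
- by move=> x [].
- by split; [exact: oner_neq0 | exact: centralizer1].
- move=> x y [x0 Cx] [y0 Cy]; split; last exact: centralizerM.
  by apply: unit_neq0; rewrite unitrMr; apply: divD.
- move=> x [x0 Cx]; split; last exact: centralizerV.
  by apply: unit_neq0; rewrite unitrV; apply: divD.
Qed.

Lemma subfield_centralizer :
  (forall x y, centralizer S x -> centralizer S y -> x * y = y * x) ->
  is_subfield (centralizer S).
Proof.
move=> commC; split=> //.
- by split; [exact: centralizer0 | exact: centralizer1].
- exact: centralizerB.
- exact: centralizerM.
- by move=> x Cx _; exact: centralizerV.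
Qed.

Lemma maximal_subfield_centralizer :
  is_abelian S -> is_subfield (centralizer S) -> is_maximal_subfield (centralizer S).
Proof.
move=> abS subC; split=> // L [_ _ _ _ commL] CL x Lx s Ss.
by apply: commL => //; apply: CL => t St; apply: abS.
Qed.

End Centralizer.

Section MaximalSubgroup.

Variables (D : unitRingType) (M : D -> Prop).
Hypothesis maxM : is_maximal_subgroup_units M.

Lemma maximal_subgroup_units_full (N : D -> Prop) x :
  is_subgroup_units N -> (forall m, M m -> N m) -> N x -> ~ M x ->
  forall y, y != 0 -> N y.
Proof.
move=> sgN MN Nx nMx y y0; apply: NNPP => nNy.
have [_ _ maxN] := maxM.
by apply/nMx/(maxN N sgN MN _ x Nx); exists y.
Qed.

Hypothesis divD : is_division_ring D.

Lemma commutative_of_central_maximal_subgroup :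
  (forall x, x != 0 -> centralizer M x) -> forall x y : D, x * y = y * x.
Proof.
move=> centralM x w.
have [->|x0] := eqVneq x 0; first by rewrite mul0r mulr0.
have [->|w0] := eqVneq w 0; first by rewrite mul0r mulr0.
have [Mw|nMw] := classic (M w); first exact: centralM.
have MCw : forall m, M m -> m != 0 /\ centralizer (eq w) m.
  have [[Mn0 _ _ _] _ _] := maxM.
  by move=> m Mm; split=> [|_ <-]; [exact: Mn0 | exact/esym/centralM].
have Cw : w != 0 /\ centralizer (eq w) w by split=> // s ->.
have [_ Cx] := maximal_subgroup_units_full (subgroup_units_centralizer _ divD)
                 MCw Cw nMw x0.
exact: Cx.
Qed.

Lemma centralizer_maximal_abelian_subgroup :
  is_abelian M -> (exists x y : D, x * y != y * x) ->
  forall y, y != 0 -> centralizer M y -> M y.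
Proof.
move=> abM [a [b /eqP nab]] y y0 Cy; apply: NNPP => nMy; apply: nab.
have [[Mn0 _ _ _] _ _] := maxM.
have MCM m : M m -> m != 0 /\ centralizer M m.
  by move=> Mm; split; [exact: Mn0 | move=> s Ms; apply: abM].
apply: commutative_of_central_maximal_subgroup => x x0.
by have [] := maximal_subgroup_units_full (subgroup_units_centralizer _ divD)
                MCM (conj y0 Cy) nMy x0.
Qed.

End MaximalSubgroup.

Theorem proposition2p2 (D : unitRingType) (M : D -> Prop) :
  is_division_ring D ->
  (exists x y : D, x * y != y * x) ->
  is_maximal_subgroup_units M ->
  is_abelian M ->
  exists K : D -> Prop, is_maximal_subfield K /\ (forall x : D, M x <-> (K x /\ x != 0)).
Proof.
move=> divD noncommD maxM abM.
have CM_M := centralizer_maximal_abelian_subgroup maxM divD abM noncommD.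
have commC x y : centralizer M x -> centralizer M y -> x * y = y * x.
  move=> Cx Cy; have [->|x0] := eqVneq x 0; first by rewrite mul0r mulr0.
  exact/esym/Cy/CM_M.
exists (centralizer M); split.
  exact/maximal_subfield_centralizer/subfield_centralizer.
have [[Mn0 _ _ _] _ _] := maxM.
move=> x; split=> [Mx | [Cx x0]]; last exact: CM_M.
by split; [move=> m Mm; apply: abM | exact: Mn0].
Qed.
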